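(* Let $F$ be a free group of finite rank $k$. Then (1) the strong capacity $SC(F)=k$ and the capacity $C(F)=k+1$; (2) the strong depth $SD(F)$ and the depth $D(F)$ are both equal to $k+1$.
   Context: All notions are in the category of groups. $X\leqslant^d A$ means there exist homomorphisms $f:X\to A$, $g:A\to X$ with $g\circ f=\mathrm{id}_X$. $X<^s A$ means $X\leqslant^d A$ holds but $A\leqslant^d X$ fails; $X<^p A$ means $X\leqslant^d A$ and $X\not\cong A$. The capacity $C(A)$ is the number of isomorphism classes of groups $X$ with $X\leqslant^d A$; the strong capacity $SC(A)$ is the number of isomorphism classes of groups $X$ with $X<^s A$. A chain of length $k$ for $A$ is $X_k<^p\cdots<^p X_1\leqslant^d A$, and an $s$-chain of length $k$ is $X_k<^s\cdots<^s X_1\leqslant^d A$; the depth $D(A)$ (resp. strong depth $SD(A)$) is the supremum of the lengths of all chains (resp. $s$-chains) for $A$. *)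

From Stdlib Require Import Arith.

Record group := Group {
  carrier :> Type;
  gmul : carrier -> carrier -> carrier;
  ginv : carrier -> carrier;
  gone : carrier;
  gmulA : forall x y z, gmul x (gmul y z) = gmul (gmul x y) z;
  gmul1x : forall x, gmul gone x = x;
  gmulx1 : forall x, gmul x gone = x;
  gmulVx : forall x, gmul (ginv x) x = gone;
  gmulxV : forall x, gmul x (ginv x) = gone
}.

Definition is_hom (G H : group) (f : G -> H) : Prop :=
  forall x y : G, f (gmul G x y) = gmul H (f x) (f y).

Definition isomorphic (G H : group) : Prop :=
  exists (f : G -> H) (g : H -> G),
    is_hom G H f /\ is_hom H G g /\
    (forall x, g (f x) = x) /\ (forall y, f (g y) = y).

Definition retract (X A : group) : Prop :=
  exists (f : X -> A) (g : A -> X),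
    is_hom X A f /\ is_hom A X g /\ (forall x, g (f x) = x).

Definition sretract (X A : group) : Prop := retract X A /\ ~ retract A X.

Definition pretract (X A : group) : Prop := retract X A /\ ~ isomorphic X A.

Definition free_on (F : group) (k : nat) (b : nat -> F) : Prop :=
  forall (G : group) (phi : nat -> G),
    (exists h : F -> G, is_hom F G h /\ forall i, i < k -> h (b i) = phi i) /\
    (forall h1 h2 : F -> G, is_hom F G h1 -> is_hom F G h2 ->
       (forall i, i < k -> h1 (b i) = h2 (b i)) -> forall x, h1 x = h2 x).

(* The number of isomorphism classes of groups satisfying P (assumed iso-invariant
   by the uses below) is exactly n. *)
Definition num_iso_classes (P : group -> Prop) (n : nat) : Prop :=
  exists Y : nat -> group,
    (forall i, i < n -> P (Y i)) /\
    (forall i j, i < n -> j < n -> isomorphic (Y i) (Y j) -> i = j) /\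
    (forall X, P X -> exists i, i < n /\ isomorphic X (Y i)).

Definition capacity (A : group) (n : nat) : Prop :=
  num_iso_classes (fun X => retract X A) n.
Definition strong_capacity (A : group) (n : nat) : Prop :=
  num_iso_classes (fun X => sretract X A) n.

(* A chain (w.r.t. the relation R) of length n for A:
   X_n R ... R X_1 <=^d A, groups indexed 1..n. *)
Definition chain_rel (R : group -> group -> Prop) (A : group) (n : nat) : Prop :=
  exists X : nat -> group,
    (0 < n -> retract (X 1) A) /\
    (forall i, 1 <= i -> i < n -> R (X (S i)) (X i)).

Definition chain := chain_rel pretract.
Definition schain := chain_rel sretract.

Definition sup_length (P : nat -> Prop) (n : nat) : Prop :=
  P n /\ forall m, P m -> m <= n.

Definition depth (A : group) (n : nat) : Prop := sup_length (chain A) n.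
Definition strong_depth (A : group) (n : nat) : Prop := sup_length (schain A) n.

(* A free group F of rank k is isomorphic to the group of reduced words on k letters.
   A retract of F is the image of an idempotent endomorphism, a subgroup generated by at
   most k elements; a generating system of minimal total length (ties broken by comparing
   first halves lexicographically) is Nielsen reduced, hence a free basis of it. So every
   retract of F is free of some rank m <= k, and conversely each such free group is a
   retract of F. Ranks are isomorphism invariants, as a free group of rank m has exactly
   2^m homomorphisms to Z/2. Hence the retracts of F are the free groups of rank m <= k
   (k + 1 classes) and the strict ones those of rank m < k (k classes); along a chain of
   proper retracts the rank strictly decreases, so chains have length at most k + 1, and
   F_k, F_(k-1), ..., F_0 is an s-chain of that length. *)

From Stdlib Require Import Arith Lia List Bool Classical ProofIrrelevance ClassicalEpsilon.
Import ListNotations.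

Lemma gmul_eq1_inv (G : group) (a b : G) : gmul G a b = gone G -> a = ginv G b.
Proof.
  intros E. rewrite <- (gmulx1 G a), <- (gmulxV G b), gmulA, E. apply gmul1x.
Qed.

Lemma gmul_inv_eq1 (G : group) (a b : G) : gmul G a (ginv G b) = gone G -> a = b.
Proof.
  intros E. rewrite <- (gmulx1 G a), <- (gmulVx G b), gmulA, E. apply gmul1x.
Qed.

Section Homomorphisms.

Variables G H K : group.

Lemma hom_id : is_hom G G (fun x => x).
Proof. intros x y; reflexivity. Qed.

Lemma hom_comp (f : G -> H) (g : H -> K) :
  is_hom G H f -> is_hom H K g -> is_hom G K (fun x => g (f x)).
Proof. intros Hf Hg x y. rewrite Hf, Hg. reflexivity. Qed.

Lemma hom_one (f : G -> H) : is_hom G H f -> f (gone G) = gone H.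
Proof.
  intros Hf. set (u := f (gone G)).
  assert (Eu : gmul H u u = u) by (unfold u; rewrite <- Hf, gmul1x; reflexivity).
  transitivity (gmul H (gmul H u u) (ginv H u)).
  - rewrite <- gmulA, gmulxV, gmulx1. reflexivity.
  - rewrite Eu. apply gmulxV.
Qed.

Lemma hom_inv (f : G -> H) x : is_hom G H f -> f (ginv G x) = ginv H (f x).
Proof. intros Hf. apply gmul_eq1_inv. rewrite <- Hf, gmulVx. apply hom_one, Hf. Qed.

End Homomorphisms.

Lemma iso_refl G : isomorphic G G.
Proof. exists (fun x => x), (fun x => x). repeat split; auto using hom_id. Qed.

Lemma iso_sym G H : isomorphic G H -> isomorphic H G.
Proof. intros [f [g [Hf [Hg [E1 E2]]]]]. exists g, f. tauto. Qed.

Lemma iso_trans G H K : isomorphic G H -> isomorphic H K -> isomorphic G K.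
Proof.
  intros [f [g [Hf [Hg [E1 E2]]]]] [f' [g' [Hf' [Hg' [E1' E2']]]]].
  exists (fun x => f' (f x)), (fun z => g (g' z)). repeat split; auto using hom_comp.
  - intros x. rewrite E1', E1. reflexivity.
  - intros z. rewrite E2, E2'. reflexivity.
Qed.

Lemma iso_retract G H : isomorphic G H -> retract G H.
Proof. intros [f [g [Hf [Hg [E1 _]]]]]. exists f, g. tauto. Qed.

Lemma retract_trans X A B : retract X A -> retract A B -> retract X B.
Proof.
  intros [f [g [Hf [Hg E]]]] [f' [g' [Hf' [Hg' E']]]].
  exists (fun x => f' (f x)), (fun z => g (g' z)). repeat split; auto using hom_comp.
  intros x. rewrite E', E. reflexivity.
Qed.

Lemma retract_iso_l X Y A : isomorphic X Y -> retract Y A -> retract X A.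
Proof. intros I R. exact (retract_trans _ _ _ (iso_retract _ _ I) R). Qed.

Lemma retract_iso_r X A B : retract X A -> isomorphic A B -> retract X B.
Proof. intros R I. exact (retract_trans _ _ _ R (iso_retract _ _ I)). Qed.

Lemma free_on_hom_id (F : group) k b (h : F -> F) : free_on F k b -> is_hom F F h ->
  (forall i, i < k -> h (b i) = b i) -> forall x, h x = x.
Proof. intros Hfree Hh Hb. apply (proj2 (Hfree F b)); auto using hom_id. Qed.

Lemma free_on_iso (G H : group) k b c : free_on G k b -> free_on H k c -> isomorphic G H.
Proof.
  intros HG HH. destruct (HG H c) as [[f [Hf Ef]] _]. destruct (HH G b) as [[g [Hg Eg]] _].
  exists f, g. repeat split; auto.
  - apply (free_on_hom_id G k b); auto using hom_comp. intros i Hi. rewrite Ef, Eg; auto.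
  - apply (free_on_hom_id H k c); auto using hom_comp. intros i Hi. rewrite Eg, Ef; auto.
Qed.

(* [f] maps [X] isomorphically onto the fixed subgroup of the idempotent [f o g]. *)
Lemma retract_iso_of_fixed (X A B : group) (f : X -> A) (g : A -> X) (psi : B -> A) :
  is_hom X A f -> is_hom A X g -> (forall x, g (f x) = x) ->
  is_hom B A psi -> (forall b b', psi b = psi b' -> b = b') ->
  (forall a, f (g a) = a <-> exists b, psi b = a) ->
  isomorphic X B.
Proof.
  intros Hf Hg Egf Hpsi Ipsi Rpsi.
  assert (Hfix : forall x, exists b, psi b = f x) by (intros x; apply Rpsi; rewrite Egf; auto).
  set (r := fun x => proj1_sig (constructive_indefinite_description _ (Hfix x))).
  assert (Er : forall x, psi (r x) = f x).
  { intros x. unfold r. destruct constructive_indefinite_description; assumption. }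
  exists r, (fun b => g (psi b)). repeat split.
  - intros x y. apply Ipsi. rewrite Hpsi, !Er. apply Hf.
  - apply hom_comp; assumption.
  - intros x. rewrite Er. apply Egf.
  - intros b. apply Ipsi. rewrite Er. apply Rpsi. eauto.
Qed.
(** * Reduced words *)

(* A letter [(i, true)] is the generator x_i and [(i, false)] its inverse. *)
Definition letter := (nat * bool)%type.
Notation word := (list letter).
Definition linv (a : letter) : letter := (fst a, negb (snd a)).

Lemma linv_involutive a : linv (linv a) = a.
Proof. destruct a as [i e]; unfold linv; simpl; now rewrite negb_involutive. Qed.

Lemma linv_neq a : linv a <> a.
Proof. destruct a as [i []]; discriminate. Qed.

Lemma letter_eq_dec (a b : letter) : {a = b} + {a <> b}.
Proof. decide equality; [apply bool_dec | apply Nat.eq_dec]. Qed.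

Definition push (a : letter) (w : word) : word :=
  match w with
  | b :: w' => if letter_eq_dec b (linv a) then w' else a :: w
  | [] => [a]
  end.

Definition wmul (u v : word) : word := fold_right push v u.
Definition winv (w : word) : word := rev (map linv w).

Fixpoint reduced (w : word) : Prop :=
  match w with
  | a :: w' => match w' with b :: _ => b <> linv a | [] => True end /\ reduced w'
  | [] => True
  end.

Lemma reduced_tl a w : reduced (a :: w) -> reduced w.
Proof. simpl; tauto. Qed.

Lemma reduced_cons a w :
  reduced w -> (forall b w', w = b :: w' -> b <> linv a) -> reduced (a :: w).
Proof. intros Hw Ha. split; auto. destruct w; eauto. Qed.

Lemma reduced_app_l x y : reduced (x ++ y) -> reduced x.
Proof.
  induction x as [|a x IH]; simpl; auto. intros [H1 H2]. split; auto. destruct x; auto.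
Qed.

Lemma reduced_mid x b c y : reduced (x ++ b :: c :: y) -> c <> linv b.
Proof. induction x as [|a x IH]; simpl; tauto. Qed.

Lemma reduced_snoc x b :
  reduced x -> (forall y c, x = y ++ [c] -> b <> linv c) -> reduced (x ++ [b]).
Proof.
  induction x as [|a x IH]; intros Hx Hb; simpl; auto. split.
  - destruct x as [|c x']; simpl.
    + apply (Hb []); reflexivity.
    + apply Hx.
  - apply IH; [exact (reduced_tl _ _ Hx)|].
    intros y c E. apply (Hb (a :: y)). simpl; congruence.
Qed.

Lemma reduced_nth v j d :
  reduced v -> S j < length v -> nth (S j) v d <> linv (nth j v d).
Proof.
  revert j; induction v as [|a v IH]; intros j Hv Hj; simpl in *; [lia|].
  destruct j as [|j].
  - destruct v; simpl in *; [lia | tauto].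
  - apply IH; [tauto | lia].
Qed.

Lemma push_reduced a w : reduced w -> reduced (push a w).
Proof.
  intros Hw. destruct w as [|b w']; simpl; auto.
  destruct (letter_eq_dec b (linv a)); [exact (reduced_tl _ _ Hw)|].
  apply reduced_cons; auto. intros c w'' E; inversion E; subst; auto.
Qed.

Lemma push_cancel a w : reduced w -> push (linv a) (push a w) = w.
Proof.
  intros Hw. destruct w as [|b w']; simpl.
  - rewrite linv_involutive. destruct (letter_eq_dec a a); congruence.
  - destruct (letter_eq_dec b (linv a)) as [E|E].
    + subst b. destruct w' as [|c w'']; simpl; auto.
      destruct Hw as [Hc _]. rewrite linv_involutive in Hc |- *.
      destruct (letter_eq_dec c a); congruence.
    + simpl. rewrite linv_involutive. destruct (letter_eq_dec a a); congruence.
Qed.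

Lemma wmul_reduced u v : reduced v -> reduced (wmul u v).
Proof. intros Hv; induction u; simpl; auto using push_reduced. Qed.

Lemma wmul_app u v w : wmul (u ++ v) w = wmul u (wmul v w).
Proof. apply fold_right_app. Qed.

Lemma wmul_push a v w : reduced w -> wmul (push a v) w = push a (wmul v w).
Proof.
  intros Hw. destruct v as [|b v']; simpl; auto.
  destruct (letter_eq_dec b (linv a)) as [E|E]; simpl; auto. subst b.
  pose proof (push_cancel (linv a) (wmul v' w)) as P. rewrite linv_involutive in P.
  rewrite P; auto using wmul_reduced.
Qed.

Lemma wmulA u v w : reduced w -> wmul (wmul u v) w = wmul u (wmul v w).
Proof. intros Hw. induction u; simpl; auto. rewrite wmul_push; congruence. Qed.

Lemma wmul_nil_r u : reduced u -> wmul u [] = u.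
Proof.
  induction u as [|a u IH]; simpl; auto. intros Hu.
  rewrite IH by exact (reduced_tl _ _ Hu).
  destruct u as [|b u']; simpl; auto.
  destruct (letter_eq_dec b (linv a)); auto. destruct Hu; contradiction.
Qed.

Lemma winv_cons a w : winv (a :: w) = winv w ++ [linv a].
Proof. reflexivity. Qed.

Lemma winv_app u v : winv (u ++ v) = winv v ++ winv u.
Proof. unfold winv. rewrite map_app, rev_app_distr. reflexivity. Qed.

Lemma winv_involutive w : winv (winv w) = w.
Proof.
  unfold winv. rewrite map_rev, rev_involutive, map_map.
  erewrite map_ext; [apply map_id | apply linv_involutive].
Qed.

Lemma winv_length w : length (winv w) = length w.
Proof. unfold winv. rewrite length_rev, length_map. reflexivity. Qed.

Lemma nth_winv v j d : j < length v -> nth j (winv v) d = linv (nth (length v - S j) v d).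
Proof.
  intros Hj. unfold winv. rewrite rev_nth by (rewrite length_map; auto).
  rewrite length_map, nth_indep with (d' := linv d) by (rewrite length_map; lia).
  apply map_nth.
Qed.

Lemma winv_reduced w : reduced w -> reduced (winv w).
Proof.
  induction w as [|a w IH]; intros Hw; simpl; auto.
  rewrite winv_cons. apply reduced_snoc; [exact (IH (reduced_tl _ _ Hw))|].
  intros y c E. destruct w as [|d w'].
  - destruct y as [|? []]; discriminate.
  - rewrite winv_cons in E. apply app_inj_tail in E as [_ <-].
    destruct Hw as [Hd _]. intros E. apply Hd. rewrite E, linv_involutive. reflexivity.
Qed.

Lemma wmulVw x : reduced x -> wmul (winv x) x = [].
Proof.
  induction x as [|a x IH]; intros Hx; simpl; auto.
  rewrite winv_cons, wmul_app. simpl. rewrite linv_involutive.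
  destruct (letter_eq_dec a a); [|congruence]. exact (IH (reduced_tl _ _ Hx)).
Qed.

Lemma wmulwV x : reduced x -> wmul x (winv x) = [].
Proof.
  intros Hx. rewrite <- (winv_involutive x) at 1. apply wmulVw, winv_reduced, Hx.
Qed.

Lemma winv_wmul x y :
  reduced x -> reduced y -> winv (wmul x y) = wmul (winv y) (winv x).
Proof.
  intros Hx Hy.
  set (z := wmul x y). set (a := wmul (winv y) (winv x)).
  assert (Hz : reduced z) by (apply wmul_reduced; auto).
  assert (Ha : reduced a) by (apply wmul_reduced, winv_reduced; auto).
  assert (E : wmul a z = []).
  { unfold a, z. rewrite wmulA, <- (wmulA (winv x)), wmulVw by auto. apply wmulVw; auto. }
  rewrite <- (wmul_nil_r a), <- (wmulwV z), <- wmulA by auto using winv_reduced.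
  rewrite E. reflexivity.
Qed.

Lemma reduced_winv_app s : reduced (winv s ++ s) -> s = [].
Proof.
  destruct s as [|a s]; auto. rewrite winv_cons, <- app_assoc. simpl. intros H.
  apply reduced_mid in H. rewrite linv_involutive in H. congruence.
Qed.

Fixpoint lcp (x y : word) : nat :=
  match x, y with
  | a :: x', b :: y' => if letter_eq_dec a b then S (lcp x' y') else 0
  | _, _ => 0
  end.

Lemma lcp_le_l x y : lcp x y <= length x.
Proof.
  revert y; induction x as [|a x IH]; destruct y as [|b y]; simpl; try lia.
  destruct letter_eq_dec; [specialize (IH y); lia | lia].
Qed.

Lemma lcp_le_r x y : lcp x y <= length y.
Proof.
  revert y; induction x as [|a x IH]; destruct y as [|b y]; simpl; try lia.
  destruct letter_eq_dec; [specialize (IH y); lia | lia].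
Qed.

Lemma lcp_sym x y : lcp x y = lcp y x.
Proof.
  revert y; induction x as [|a x IH]; destruct y as [|b y]; simpl; auto.
  destruct (letter_eq_dec a b), (letter_eq_dec b a); subst; congruence.
Qed.

Lemma lcp_nth x y j d : j < lcp x y -> nth j x d = nth j y d.
Proof.
  revert y j; induction x as [|a x IH]; destruct y as [|b y]; simpl; try lia.
  intros j. destruct letter_eq_dec; [subst | lia].
  destruct j; auto. intros; apply IH; lia.
Qed.

Lemma lcp_firstn x y : firstn (lcp x y) x = firstn (lcp x y) y.
Proof.
  revert y; induction x as [|a x IH]; destruct y as [|b y]; simpl; auto.
  destruct letter_eq_dec; subst; simpl; [rewrite IH|]; reflexivity.
Qed.

Lemma lcp_firstn_app a v k t :
  lcp a v < k -> k <= length v -> lcp a (firstn k v ++ t) = lcp a v.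
Proof.
  revert v k; induction a as [|x a IH]; intros v k H1 H2; simpl; auto.
  destruct v as [|y v]; simpl in *; [lia|]. destruct k as [|k]; [lia|]. simpl.
  destruct letter_eq_dec; auto. rewrite IH; auto; lia.
Qed.

Lemma wmul_lcp x y : reduced x -> reduced y ->
  wmul x y = firstn (length x - lcp (winv x) y) x ++ skipn (lcp (winv x) y) y.
Proof.
  revert y. induction x as [|a x IH] using rev_ind; intros y Hx Hy; [reflexivity|].
  assert (Hx' : reduced x) by exact (reduced_app_l _ _ Hx).
  destruct y as [|b y'].
  { rewrite wmul_nil_r by assumption.
    destruct (winv (x ++ [a])); simpl; rewrite Nat.sub_0_r, firstn_all, app_nil_r; reflexivity. }
  rewrite wmul_app, winv_app, length_app. simpl.
  destruct (letter_eq_dec b (linv a)) as [E|E].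
  - subst b. destruct (letter_eq_dec (linv a) (linv a)); [|congruence].
    rewrite IH by first [assumption | exact (reduced_tl _ _ Hy)].
    rewrite firstn_app.
    assert (lcp (winv x) y' <= length x) by (rewrite <- (winv_length x); apply lcp_le_l).
    replace (length x + 1 - S (lcp (winv x) y') - length x) with 0 by lia.
    cbn [firstn skipn]. rewrite app_nil_r. do 2 f_equal. lia.
  - destruct (letter_eq_dec (linv a) b) as [E'|E']; [congruence|].
    rewrite IH; [| assumption |].
    2: { apply reduced_cons; auto. intros c w' Ew; inversion Ew; subst; auto. }
    assert (Z : lcp (winv x) (a :: b :: y') = 0).
    { destruct x as [|d x''] using rev_ind; [reflexivity|].
      rewrite winv_app. simpl. destruct letter_eq_dec as [e|e]; auto.
      rewrite <- app_assoc in Hx. apply reduced_mid in Hx. congruence. }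
    rewrite Z. simpl. rewrite !Nat.sub_0_r, firstn_all.
    rewrite firstn_all2 by (rewrite length_app; simpl; lia).
    rewrite <- app_assoc. reflexivity.
Qed.

Lemma wmul_length x y : reduced x -> reduced y ->
  length (wmul x y) + 2 * lcp (winv x) y = length x + length y.
Proof.
  intros Hx Hy. rewrite wmul_lcp, length_app, length_firstn, length_skipn by auto.
  pose proof (lcp_le_l (winv x) y). pose proof (lcp_le_r (winv x) y).
  rewrite winv_length in *. lia.
Qed.

(* If the first half of [v] were cancelled by [winv v], the middle of [v] would
   contain a letter next to its inverse (or equal to its own inverse). *)
Lemma lcp_winv_self v : reduced v -> v <> [] -> 2 * lcp (winv v) v < length v.
Proof.
  intros Hr Hn. set (a := lcp (winv v) v). set (n := length v).
  assert (Hpos : n > 0) by (destruct v; simpl in *; [congruence | unfold n; simpl; lia]).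
  destruct (Nat.lt_ge_cases (2 * a) n) as [L|L]; auto. exfalso.
  pose (d := (0, true) : letter).
  assert (K : forall j, j < a -> nth j v d = linv (nth (n - S j) v d)).
  { intros j Hj. rewrite <- lcp_nth with (x := winv v) by auto.
    apply nth_winv. pose proof (lcp_le_r (winv v) v). unfold a, n in *; lia. }
  destruct (Nat.Even_or_Odd n) as [[t Ht]|[t Ht]].
  - specialize (K (t - 1) ltac:(lia)). replace (n - S (t - 1)) with t in K by lia.
    apply (reduced_nth v (t - 1) d Hr); [unfold n in *; lia|].
    replace (S (t - 1)) with t by lia. rewrite K, linv_involutive. reflexivity.
  - specialize (K t ltac:(lia)). replace (n - S t) with t in K by lia.
    exact (linv_neq _ (eq_sym K)).
Qed.

(** * The free group of rank n *)

Definition bounded (n : nat) (w : word) : Prop := forall a, In a w -> fst a < n.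

Lemma bounded_cons n a w : bounded n (a :: w) <-> fst a < n /\ bounded n w.
Proof.
  split.
  - intros H. split; [apply H; left; reflexivity | intros b Hb; apply H; right; exact Hb].
  - intros [Ha Hw] b [<- | Hb]; auto.
Qed.

Lemma in_push b a w : In b (push a w) -> b = a \/ In b w.
Proof.
  destruct w as [|c w]; simpl; [intuition|].
  destruct letter_eq_dec; simpl; intuition.
Qed.

Lemma bounded_wmul n u v : bounded n u -> bounded n v -> bounded n (wmul u v).
Proof.
  intros Hu Hv. induction u as [|a u IH]; simpl; auto.
  apply bounded_cons in Hu as [Ha Hu]. intros b Hb.
  apply in_push in Hb as [-> | Hb]; auto. exact (IH Hu b Hb).
Qed.

Lemma bounded_winv n w : bounded n w -> bounded n (winv w).
Proof.
  intros Hw b Hb. unfold winv in Hb. apply in_rev, in_map_iff in Hb as [c [<- Hc]].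
  exact (Hw c Hc).
Qed.

Lemma bounded_firstn n k w : bounded n w -> bounded n (firstn k w).
Proof. intros Hw b Hb. apply Hw. rewrite <- (firstn_skipn k w). apply in_or_app; auto. Qed.

Lemma bounded_skipn n k w : bounded n w -> bounded n (skipn k w).
Proof. intros Hw b Hb. apply Hw. rewrite <- (firstn_skipn k w). apply in_or_app; auto. Qed.

Definition reduced_on (n : nat) (w : word) : Prop := reduced w /\ bounded n w.

Lemma reduced_on_nil n : reduced_on n [].
Proof. split; [exact I | intros a []]. Qed.

Lemma reduced_on_wmul n x y : reduced_on n x -> reduced_on n y -> reduced_on n (wmul x y).
Proof. intros [] []. split; [apply wmul_reduced | apply bounded_wmul]; auto. Qed.

Lemma reduced_on_winv n x : reduced_on n x -> reduced_on n (winv x).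
Proof. intros []. split; [apply winv_reduced | apply bounded_winv]; auto. Qed.

Lemma reduced_on_push n a w : fst a < n -> reduced_on n w -> reduced_on n (push a w).
Proof.
  intros Ha [R B]. split; [apply push_reduced, R|].
  intros b Hb. apply in_push in Hb as [-> | Hb]; auto.
Qed.

Lemma reduced_on_cons n a w : reduced_on n (a :: w) -> fst a < n /\ reduced_on n w.
Proof.
  intros [R B]. apply bounded_cons in B as [Ha Hw]. split; [|split]; eauto using reduced_tl.
Qed.

Lemma reduced_on_letter n a : fst a < n -> reduced_on n [a].
Proof. intros Ha. split; [simpl; auto | intros b [<- | []]; exact Ha]. Qed.

Definition orient (a : letter) (w : word) : word := if snd a then w else winv w.

Lemma orient_involutive a w : orient a (orient a w) = w.
Proof. unfold orient; destruct (snd a); rewrite ?winv_involutive; reflexivity. Qed.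

Lemma orient_linv a w : orient (linv a) w = winv (orient a w).
Proof. destruct a as [i []]; unfold orient; simpl; rewrite ?winv_involutive; reflexivity. Qed.

Lemma orient_length a w : length (orient a w) = length w.
Proof. unfold orient; destruct (snd a); [reflexivity | apply winv_length]. Qed.

Lemma orient_reduced_on n a w : reduced_on n w -> reduced_on n (orient a w).
Proof. unfold orient; destruct (snd a); auto using reduced_on_winv. Qed.

Section FreeGroup.

Variable n : nat.

Definition fword : Type := {w : word | reduced_on n w}.

Definition fmul (x y : fword) : fword :=
  exist _ (wmul (proj1_sig x) (proj1_sig y))
    (reduced_on_wmul n _ _ (proj2_sig x) (proj2_sig y)).
Definition finv (x : fword) : fword :=
  exist _ (winv (proj1_sig x)) (reduced_on_winv n _ (proj2_sig x)).
Definition fone : fword := exist _ [] (reduced_on_nil n).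

Lemma fword_eq (x y : fword) : proj1_sig x = proj1_sig y -> x = y.
Proof.
  destruct x as [x Hx], y as [y Hy]; simpl; intros ->. f_equal. apply proof_irrelevance.
Qed.

Lemma fmulA x y z : fmul x (fmul y z) = fmul (fmul x y) z.
Proof. apply fword_eq; simpl. symmetry. apply wmulA, (proj2_sig z). Qed.
Lemma fmul1x x : fmul fone x = x.
Proof. apply fword_eq; reflexivity. Qed.
Lemma fmulx1 x : fmul x fone = x.
Proof. apply fword_eq, wmul_nil_r, (proj2_sig x). Qed.
Lemma fmulVx x : fmul (finv x) x = fone.
Proof. apply fword_eq, wmulVw, (proj2_sig x). Qed.
Lemma fmulxV x : fmul x (finv x) = fone.
Proof. apply fword_eq, wmulwV, (proj2_sig x). Qed.

Definition free_group : group := Group fword fmul finv fone fmulA fmul1x fmulx1 fmulVx fmulxV.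

Definition fgen (i : nat) : free_group :=
  match lt_dec i n with
  | left H => exist _ [(i, true)] (reduced_on_letter n (i, true) H)
  | right _ => fone
  end.

Lemma fgen_word i : i < n -> proj1_sig (fgen i) = [(i, true)].
Proof. intros Hi. unfold fgen. destruct lt_dec; [reflexivity | lia]. Qed.

End FreeGroup.

Definition leval (G : group) (phi : nat -> G) (a : letter) : G :=
  if snd a then phi (fst a) else ginv G (phi (fst a)).

Definition weval (G : group) (phi : nat -> G) (w : word) : G :=
  fold_right (fun a acc => gmul G (leval G phi a) acc) (gone G) w.

Lemma weval_push (G : group) phi a w :
  weval G phi (push a w) = gmul G (leval G phi a) (weval G phi w).
Proof.
  destruct w as [|b w]; simpl; auto.
  destruct letter_eq_dec as [E|E]; simpl; auto. subst b.
  rewrite gmulA. unfold leval, linv; simpl. destruct (snd a); simpl.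
  - rewrite gmulxV, gmul1x; reflexivity.
  - rewrite gmulVx, gmul1x; reflexivity.
Qed.

Lemma weval_wmul (G : group) phi u v :
  weval G phi (wmul u v) = gmul G (weval G phi u) (weval G phi v).
Proof.
  induction u as [|a u IH]; simpl; [rewrite gmul1x; reflexivity|].
  rewrite weval_push, IH, gmulA. reflexivity.
Qed.

Lemma weval_ext (G : group) phi psi n w : bounded n w ->
  (forall i, i < n -> phi i = psi i) -> weval G phi w = weval G psi w.
Proof.
  intros Hw E. induction w as [|a w IH]; simpl; auto.
  apply bounded_cons in Hw as [Ha Hw]. unfold leval. rewrite E, IH; auto.
Qed.

Lemma hom_weval (G H : group) (h : G -> H) phi w :
  is_hom G H h -> h (weval G phi w) = weval H (fun i => h (phi i)) w.
Proof.
  intros Hh. induction w as [|a w IH]; simpl; [apply hom_one, Hh|].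
  rewrite Hh, IH. unfold leval. destruct (snd a); [|rewrite hom_inv]; auto.
Qed.

Lemma leval_free_group n (phi : nat -> free_group n) a :
  proj1_sig (leval (free_group n) phi a) = orient a (proj1_sig (phi (fst a))).
Proof. unfold leval, orient. destruct (snd a); reflexivity. Qed.

Lemma weval_fgen_word n w : reduced_on n w -> proj1_sig (weval (free_group n) (fgen n) w) = w.
Proof.
  induction w as [|a w IH]; intros Hw; [reflexivity|].
  apply reduced_on_cons in Hw as Haw. destruct Haw as [Ha Hw'].
  simpl. rewrite leval_free_group, fgen_word, IH by assumption.
  destruct w as [|b w]; [destruct a as [i []]; reflexivity|].
  assert (E : orient a [(fst a, true)] = [a]) by (destruct a as [i []]; reflexivity).
  rewrite E. simpl. destruct letter_eq_dec; [|reflexivity].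
  destruct Hw as [[Hb _] _]. contradiction.
Qed.

Lemma weval_fgen n (x : free_group n) : weval (free_group n) (fgen n) (proj1_sig x) = x.
Proof. apply fword_eq, weval_fgen_word, (proj2_sig x). Qed.

Lemma free_group_free n : free_on (free_group n) n (fgen n).
Proof.
  intros G phi. split.
  - exists (fun x : free_group n => weval G phi (proj1_sig x)). split.
    + intros x y. apply weval_wmul.
    + intros i Hi. simpl. rewrite fgen_word by exact Hi. simpl. apply gmulx1.
  - intros h1 h2 H1 H2 E x. rewrite <- (weval_fgen n x), !hom_weval by assumption.
    apply (weval_ext G _ _ n); [apply (proj2_sig x) | exact E].
Qed.

Lemma free_group_retract_le j j' : j <= j' -> retract (free_group j) (free_group j').
Proof.
  intros Hj. destruct (free_group_free j (free_group j') (fgen j')) as [[f [Hf Ef]] _].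
  destruct (free_group_free j' (free_group j) (fgen j)) as [[g [Hg Eg]] _].
  exists f, g. repeat split; auto.
  apply (free_on_hom_id _ j (fgen j)); auto using hom_comp, free_group_free.
  intros i Hi. rewrite Ef, Eg by lia. reflexivity.
Qed.

(** * The rank of a free group *)

Fixpoint bool_lists (k : nat) : list (list bool) :=
  match k with
  | 0 => [[]]
  | S k => map (cons true) (bool_lists k) ++ map (cons false) (bool_lists k)
  end.

Lemma bool_lists_length k : length (bool_lists k) = 2 ^ k.
Proof. induction k; simpl; auto. rewrite length_app, !length_map. lia. Qed.

Lemma in_bool_lists k l : In l (bool_lists k) <-> length l = k.
Proof.
  revert l; induction k as [|k IH]; intros l; simpl.
  - split; [intros [<- | []]; reflexivity | destruct l; simpl; [auto | discriminate]].
  - rewrite in_app_iff, !in_map_iff. split.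
    + intros [[x [<- H]] | [x [<- H]]]; apply IH in H; simpl; auto.
    + destruct l as [|c l]; simpl; [discriminate|]. intros [= E].
      destruct c; [left | right]; exists l; split; auto; apply IH; exact E.
Qed.

Lemma bool_lists_NoDup k : NoDup (bool_lists k).
Proof.
  induction k as [|k IH]; simpl; [repeat constructor; intros []|].
  apply NoDup_app;
    try (apply NoDup_map_NoDup_ForallPairs; [|exact IH]; intros x y _ _ [= E]; exact E).
  intros x H1 H2. apply in_map_iff in H1 as [? [<- _]], H2 as [? [E _]]. discriminate.
Qed.

Lemma bool_lists_inj_le a b (xi : list bool -> list bool) :
  (forall l, length l = b -> length (xi l) = a) ->
  (forall l l', length l = b -> length l' = b -> xi l = xi l' -> l = l') -> b <= a.
Proof.
  intros Hlen Hinj.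
  assert (ND : NoDup (map xi (bool_lists b))).
  { apply NoDup_map_NoDup_ForallPairs; [|apply bool_lists_NoDup].
    intros x y Hx Hy. apply in_bool_lists in Hx, Hy. auto. }
  assert (Inc : incl (map xi (bool_lists b)) (bool_lists a)).
  { intros z Hz. apply in_map_iff in Hz as [l [<- Hl]].
    apply in_bool_lists, Hlen, in_bool_lists, Hl. }
  pose proof (NoDup_incl_length ND Inc) as L.
  rewrite length_map, !bool_lists_length in L.
  destruct (Nat.le_gt_cases b a) as [|Hlt]; auto.
  pose proof (Nat.pow_lt_mono_r 2 a b ltac:(lia) Hlt). lia.
Qed.

Lemma nth_map_seq {A} (F : nat -> A) k i d : i < k -> nth i (map F (seq 0 k)) d = F i.
Proof.
  intros Hi. rewrite nth_indep with (d' := F 0) by (rewrite length_map, length_seq; exact Hi).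
  rewrite map_nth, seq_nth by exact Hi. reflexivity.
Qed.

Definition Z2 : group :=
  Group bool xorb (fun x => x) false (fun x y z => eq_sym (xorb_assoc_reverse x y z))
    xorb_false_l xorb_false_r xorb_nilpotent xorb_nilpotent.

(* Homomorphisms to Z/2 separate the ranks: [free_group b] has [2 ^ b] of them. *)
Lemma free_group_iso_rank_le a b :
  isomorphic (free_group a) (free_group b) -> b <= a.
Proof.
  intros [f [g [Hf [Hg [_ Efg]]]]].
  set (chi := fun (l : list bool) (x : free_group b) =>
                weval Z2 (fun i => nth i l false) (proj1_sig x) : Z2).
  assert (Hchi : forall l, is_hom (free_group b) Z2 (chi l)) by (intros l x y; apply weval_wmul).
  assert (chi_fgen : forall l i, i < b -> chi l (fgen b i) = nth i l false).
  { intros l i Hi. unfold chi. rewrite fgen_word by exact Hi. apply xorb_false_r. }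
  apply (bool_lists_inj_le a b (fun l => map (fun i => chi l (f (fgen a i))) (seq 0 a))).
  { intros l _. rewrite length_map, length_seq. reflexivity. }
  intros l l' Hl Hl' E.
  assert (Agree : forall x, chi l (f x) = chi l' (f x)).
  { apply (proj2 (free_group_free a Z2 (fun i => chi l (f (fgen a i)))));
      auto using hom_comp.
    intros i Hi. apply (f_equal (fun s => nth i s false)) in E.
    rewrite !(nth_map_seq _ a i false Hi) in E. exact E. }
  apply nth_ext with (d := false) (d' := false); [congruence|]. intros i Hi.
  rewrite <- !chi_fgen by lia. rewrite <- (Efg (fgen b i)). apply Agree.
Qed.

Lemma free_group_rank_inj a b : isomorphic (free_group a) (free_group b) -> a = b.
Proof.
  intros I. apply Nat.le_antisymm; apply free_group_iso_rank_le; [apply iso_sym|]; exact I.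
Qed.

(** * Subgroups spanned by finitely many words *)

Inductive gen (Zs : list word) : word -> Prop :=
| gen_nil : gen Zs []
| gen_l : forall z x, In z Zs -> gen Zs x -> gen Zs (wmul z x)
| gen_li : forall z x, In z Zs -> gen Zs x -> gen Zs (wmul (winv z) x).

Definition all_reduced (Zs : list word) : Prop := forall z, In z Zs -> reduced z.

Definition same_span (Zs Ys : list word) : Prop := forall x, gen Zs x <-> gen Ys x.

Lemma gen_reduced Zs x : gen Zs x -> reduced x.
Proof. intros H; induction H; simpl; auto using wmul_reduced. Qed.

Lemma gen_wmul Zs x y : gen Zs x -> gen Zs y -> gen Zs (wmul x y).
Proof.
  intros Hx Hy. induction Hx as [|z x Hz Hx IH|z x Hz Hx IH]; auto.
  - rewrite wmulA by exact (gen_reduced _ _ Hy). apply gen_l; auto.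
  - rewrite wmulA by exact (gen_reduced _ _ Hy). apply gen_li; auto.
Qed.

Section Span.

Variable Zs : list word.
Hypothesis Zs_red : all_reduced Zs.

Lemma gen_in z : In z Zs -> gen Zs z.
Proof. intros Hz. rewrite <- (wmul_nil_r z) by auto. apply gen_l; auto. constructor. Qed.

Lemma gen_winv_in z : In z Zs -> gen Zs (winv z).
Proof.
  intros Hz. rewrite <- (wmul_nil_r (winv z)) by auto using winv_reduced.
  apply gen_li; auto. constructor.
Qed.

Lemma gen_winv x : gen Zs x -> gen Zs (winv x).
Proof.
  intros Hx. induction Hx as [|z x Hz Hx IH|z x Hz Hx IH]; [constructor| |];
    pose proof (Zs_red z Hz); pose proof (gen_reduced _ _ Hx).
  - rewrite winv_wmul by assumption.
    apply gen_wmul; auto using gen_winv_in.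
  - rewrite winv_wmul, winv_involutive by auto using winv_reduced.
    apply gen_wmul; auto using gen_in.
Qed.

End Span.

Lemma gen_incl Zs Ys x : all_reduced Ys ->
  (forall z, In z Zs -> gen Ys z) -> gen Zs x -> gen Ys x.
Proof.
  intros HY Hs Hx. induction Hx; [constructor | |]; apply gen_wmul; auto using gen_winv.
Qed.

Definition subst_letter (Zs : list word) (a : letter) : word := orient a (nth (fst a) Zs []).

Definition subst_word (Zs : list word) (ws : word) : word :=
  fold_right (fun a acc => wmul (subst_letter Zs a) acc) [] ws.

Lemma subst_letter_linv Zs a : subst_letter Zs (linv a) = winv (subst_letter Zs a).
Proof. apply orient_linv. Qed.

Lemma subst_letter_gen Zs a : all_reduced Zs -> fst a < length Zs -> gen Zs (subst_letter Zs a).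
Proof.
  intros HZ Ha. unfold subst_letter, orient. pose proof (nth_In Zs [] Ha).
  destruct (snd a); [apply gen_in | apply gen_winv_in]; auto.
Qed.

Lemma subst_letter_reduced Zs a :
  all_reduced Zs -> fst a < length Zs -> reduced (subst_letter Zs a).
Proof. intros HZ Ha. apply (gen_reduced Zs), subst_letter_gen; auto. Qed.

Lemma subst_word_reduced Zs ws : reduced (subst_word Zs ws).
Proof. induction ws; simpl; auto using wmul_reduced. Qed.

Lemma subst_word_push Zs a w : all_reduced Zs -> fst a < length Zs ->
  subst_word Zs (push a w) = wmul (subst_letter Zs a) (subst_word Zs w).
Proof.
  intros HZ Ha. destruct w as [|b w]; simpl; auto.
  destruct letter_eq_dec as [E|E]; simpl; auto. subst b.
  rewrite <- wmulA by apply subst_word_reduced.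
  rewrite subst_letter_linv, wmulwV by auto using subst_letter_reduced. reflexivity.
Qed.

Lemma gen_subst_word Zs x : all_reduced Zs ->
  gen Zs x <-> exists w, reduced_on (length Zs) w /\ subst_word Zs w = x.
Proof.
  intros HZ. split.
  - intros Hx. induction Hx as [|z x Hz Hx IH|z x Hz Hx IH].
    + exists []. split; [apply reduced_on_nil | reflexivity].
    + destruct IH as [w [Hw <-]]. apply In_nth with (d := []) in Hz as [i [Hi <-]].
      exists (push (i, true) w). split; [apply reduced_on_push | apply subst_word_push]; auto.
    + destruct IH as [w [Hw <-]]. apply In_nth with (d := []) in Hz as [i [Hi <-]].
      exists (push (i, false) w). split; [apply reduced_on_push | apply subst_word_push]; auto.
  - intros [w [[_ Hw] <-]]. induction w as [|a w IH]; [constructor|].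
    apply bounded_cons in Hw as [Ha Hw]. apply gen_wmul; auto using subst_letter_gen.
Qed.

(** * Nielsen reduction *)

Section ListSurgery.

Context {A : Type}.

Fixpoint set_nth (l : list A) (j : nat) (z : A) : list A :=
  match l, j with
  | [], _ => []
  | _ :: l', 0 => z :: l'
  | y :: l', S j' => y :: set_nth l' j' z
  end.

Fixpoint drop_nth (l : list A) (j : nat) : list A :=
  match l, j with
  | [], _ => []
  | _ :: l', 0 => l'
  | y :: l', S j' => y :: drop_nth l' j'
  end.

Lemma set_nth_length l j z : length (set_nth l j z) = length l.
Proof. revert j; induction l; destruct j; simpl; auto. Qed.

Lemma nth_set_nth_eq l j z d : j < length l -> nth j (set_nth l j z) d = z.
Proof.
  revert j; induction l as [|y l IH]; intros [|j] Hj; simpl in *; try lia; auto.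
  apply IH; lia.
Qed.

Lemma nth_set_nth_neq l j z i d : i <> j -> nth i (set_nth l j z) d = nth i l d.
Proof. revert i j; induction l; destruct i, j; simpl; intros; auto; lia. Qed.

Lemma in_set_nth l j z x : In x (set_nth l j z) -> x = z \/ In x l.
Proof.
  revert j; induction l as [|y l IH]; intros [|j] H; simpl in *; auto.
  - destruct H as [<- | H]; auto.
  - destruct H as [<- | H]; auto. apply IH in H. tauto.
Qed.

Lemma set_nth_sum (g : A -> nat) l j z d : j < length l ->
  list_sum (map g (set_nth l j z)) + g (nth j l d) = list_sum (map g l) + g z.
Proof.
  revert j; induction l as [|y l IH]; destruct j; simpl; intros; try lia.
  specialize (IH j ltac:(lia)). lia.
Qed.

Lemma drop_nth_length l j : j < length l -> S (length (drop_nth l j)) = length l.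
Proof.
  revert j; induction l as [|y l IH]; destruct j; simpl; intros; try lia. rewrite IH; lia.
Qed.

Lemma drop_nth_sum (g : A -> nat) l j d : j < length l ->
  list_sum (map g (drop_nth l j)) + g (nth j l d) = list_sum (map g l).
Proof.
  revert j; induction l as [|y l IH]; destruct j; simpl; intros; try lia.
  specialize (IH j ltac:(lia)). lia.
Qed.

Lemma in_drop_nth l j x : In x (drop_nth l j) -> In x l.
Proof.
  revert j; induction l as [|y l IH]; intros [|j] H; simpl in *; auto.
  destruct H as [<- | H]; eauto.
Qed.

Lemma in_drop_nth_or l j x d : In x l -> x = nth j l d \/ In x (drop_nth l j).
Proof.
  revert j; induction l as [|y l IH]; intros [|j] H; simpl in *; try tauto;
    destruct H as [<- | H]; auto.
  destruct (IH j H); tauto.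
Qed.

End ListSurgery.

(* A word read as a numeral in base [B]; letters over [n] generators are digits in base [2 n]. *)
Definition letter_code (a : letter) : nat := 2 * fst a + (if snd a then 1 else 0).

Fixpoint word_code (B : nat) (w : word) : nat :=
  match w with
  | [] => 0
  | a :: w' => letter_code a * B ^ length w' + word_code B w'
  end.

Lemma letter_code_inj a b : letter_code a = letter_code b -> a = b.
Proof. destruct a as [i []], b as [j []]; unfold letter_code; simpl; intros; f_equal; lia. Qed.

Lemma word_code_lt n w : bounded n w -> word_code (2 * n) w < (2 * n) ^ length w.
Proof.
  induction w as [|a w IH]; intros Hw; [simpl; lia|].
  apply bounded_cons in Hw as [Ha Hw]. specialize (IH Hw).
  assert (letter_code a < 2 * n) by (destruct a as [i []]; unfold letter_code; simpl in *; lia).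
  cbn [word_code length]. rewrite Nat.pow_succ_r'. nia.
Qed.

Lemma word_code_app B u v : word_code B (u ++ v) = word_code B u * B ^ length v + word_code B v.
Proof. induction u as [|a u IH]; simpl; auto. rewrite IH, length_app, Nat.pow_add_r. ring. Qed.

Lemma word_code_inj n p q : bounded n p -> bounded n q -> length p = length q ->
  word_code (2 * n) p = word_code (2 * n) q -> p = q.
Proof.
  revert q; induction p as [|a p IH]; intros q Hp Hq Hl E; destruct q as [|b q];
    simpl in *; try lia; auto.
  apply bounded_cons in Hp as [_ Hp], Hq as [_ Hq]. injection Hl as Hl. rewrite Hl in E.
  pose proof (word_code_lt n p Hp). pose proof (word_code_lt n q Hq). rewrite Hl in *.
  rewrite !(Nat.mul_comm (letter_code _)) in E.
  apply Nat.div_mod_unique in E as [E1 E2]; auto.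
  apply letter_code_inj in E1. subst. f_equal. auto.
Qed.

(* [half_code] breaks ties between Nielsen systems of equal total length. *)
Definition half (w : word) : word := firstn ((length w + 1) / 2) w.
Definition half_code (B : nat) (w : word) : nat :=
  word_code B (half w) + word_code B (half (winv w)).

Lemma half_code_orient B a w : half_code B (orient a w) = half_code B w.
Proof. unfold orient, half_code. destruct (snd a); rewrite ?winv_involutive; lia. Qed.

(* As [length P <= length r], the prefix lies in the first half of the word, while the
   first half of its inverse lies inside [winv r]. *)
Lemma half_code_lt_prefix n P Q r :
  bounded n P -> bounded n Q -> bounded n r -> length P = length Q -> length P <= length r ->
  word_code (2 * n) Q < word_code (2 * n) P ->
  half_code (2 * n) (Q ++ r) < half_code (2 * n) (P ++ r).
Proof.
  intros bP bQ br HL Hr Hlt. unfold half_code, half.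
  rewrite !winv_length, !length_app, HL, !winv_app, !firstn_app, !winv_length.
  set (h := (length Q + length r + 1) / 2).
  assert (Hh : length Q <= h <= length r).
  { pose proof (Nat.div_mod (length Q + length r + 1) 2).
    pose proof (Nat.mod_upper_bound (length Q + length r + 1) 2). lia. }
  replace (h - length r) with 0 by lia. rewrite !firstn_O, !app_nil_r.
  rewrite (firstn_all2 P), (firstn_all2 Q) by lia. rewrite !word_code_app.
  set (k := length (firstn (h - length Q) r)).
  pose proof (word_code_lt n _ (bounded_firstn n (h - length Q) r br)). fold k in H.
  rewrite HL. fold k. nia.
Qed.

Definition total_length (Zs : list word) : nat := list_sum (map (@length letter) Zs).

(* The successor makes dropping an empty word decrease the weight. *)
Definition weight (n : nat) (Zs : list word) : nat :=
  list_sum (map (fun z => S (half_code (2 * n) z)) Zs).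

Definition nielsen_le (n : nat) (Zs Zs' : list word) : Prop :=
  total_length Zs < total_length Zs' \/
  (total_length Zs = total_length Zs' /\ weight n Zs <= weight n Zs').

Definition all_reduced_on (n : nat) (Zs : list word) : Prop :=
  forall z, In z Zs -> reduced_on n z.

Definition nielsen_minimal (n : nat) (Zs : list word) : Prop :=
  all_reduced_on n Zs /\
  forall Zs', length Zs' <= length Zs -> all_reduced_on n Zs' -> same_span Zs' Zs ->
    nielsen_le n Zs Zs'.

Lemma all_reduced_on_reduced n Zs : all_reduced_on n Zs -> all_reduced Zs.
Proof. intros H z Hz. apply H, Hz. Qed.

Lemma ex_min_nat (Q : nat -> Prop) m : Q m -> exists k, Q k /\ forall j, Q j -> k <= j.
Proof.
  induction m as [m IH] using (well_founded_induction lt_wf). intros Hm.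
  destruct (classic (exists j, Q j /\ j < m)) as [[j [Hj Hjm]] | Hno]; [exact (IH j Hjm Hj)|].
  exists m. split; [exact Hm|]. intros j Hj. apply Nat.nlt_ge. intros Hjm. eauto.
Qed.

Lemma nielsen_minimal_exists n Ys : all_reduced_on n Ys ->
  exists Zs, length Zs <= length Ys /\ same_span Zs Ys /\ nielsen_minimal n Zs.
Proof.
  intros HY.
  set (adm := fun Zs => length Zs <= length Ys /\ all_reduced_on n Zs /\ same_span Zs Ys).
  destruct (ex_min_nat (fun t => exists Zs, adm Zs /\ total_length Zs = t) (total_length Ys))
    as [t [[Z0 [HZ0 <-]] Ht]].
  { exists Ys. split; [split; [lia | split; [exact HY | intros x; reflexivity]] | reflexivity]. }
  destruct (ex_min_nat (fun w => exists Zs, adm Zs /\ total_length Zs = total_length Z0 /\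
                                       weight n Zs = w) (weight n Z0))
    as [w [[Zs [[HZl [HZr HZs]] [HZt <-]]] Hw]].
  { exists Z0. auto. }
  exists Zs. split; [exact HZl|]. split; [exact HZs|]. split; [exact HZr|].
  intros Zs' Hl Hr Hs.
  assert (Hadm : adm Zs').
  { split; [lia|]. split; [exact Hr|]. intros x. rewrite (Hs x). apply HZs. }
  assert (total_length Z0 <= total_length Zs') by (apply Ht; eauto).
  destruct (Nat.eq_dec (total_length Zs) (total_length Zs')) as [E|E]; [|left; lia].
  right. split; [exact E|]. apply Hw. exists Zs'. split; [exact Hadm | split; [lia | reflexivity]].
Qed.

Lemma letter_same_fst a b : fst a = fst b -> a <> b -> a = linv b.
Proof.
  destruct a as [i e], b as [j f]; unfold linv; simpl; intros <- Hne.
  destruct e, f; simpl; congruence.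
Qed.

(* [orient q] makes the signed letter [q] spell [z_p z_q] after the Nielsen move. *)
Lemma same_span_nielsen_move Zs p q :
  all_reduced Zs -> fst p < length Zs -> fst q < length Zs -> fst p <> fst q ->
  same_span
    (set_nth Zs (fst q) (orient q (wmul (subst_letter Zs p) (subst_letter Zs q)))) Zs.
Proof.
  intros HZ Hp Hq Hpq.
  set (g := subst_letter Zs p). set (y := subst_letter Zs q).
  set (Zs' := set_nth Zs (fst q) (orient q (wmul g y))).
  assert (Hg : gen Zs g) by (apply subst_letter_gen; auto).
  assert (Hy : gen Zs y) by (apply subst_letter_gen; auto).
  assert (Hlen : length Zs' = length Zs) by apply set_nth_length.
  assert (HZ' : all_reduced Zs').
  { intros z Hz. apply in_set_nth in Hz as [-> | Hz]; auto.
    unfold orient. destruct (snd q); eauto using winv_reduced, wmul_reduced, gen_reduced. }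
  assert (Hg' : subst_letter Zs' p = g).
  { unfold subst_letter, Zs'. rewrite nth_set_nth_neq by exact Hpq. reflexivity. }
  assert (Hy' : subst_letter Zs' q = wmul g y).
  { unfold subst_letter, Zs'. rewrite nth_set_nth_eq by exact Hq. apply orient_involutive. }
  intros x. split; apply gen_incl; auto.
  - intros z Hz. apply in_set_nth in Hz as [-> | Hz]; [|apply gen_in; auto].
    unfold orient. destruct (snd q); [|apply gen_winv]; auto using gen_wmul.
  - intros z Hz. apply In_nth with (d := []) in Hz as [i [Hi <-]].
    destruct (Nat.eq_dec i (fst q)) as [-> | Hiq].
    + assert (Ey : y = wmul (winv g) (wmul g y)).
      { rewrite <- wmulA, wmulVw by eauto using gen_reduced. reflexivity. }
      assert (gen Zs' y).
      { rewrite Ey, <- Hy', <- Hg'.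
        apply gen_wmul; [apply gen_winv|]; auto; apply subst_letter_gen; auto; lia. }
      rewrite <- (orient_involutive q (nth _ _ _)). fold (subst_letter Zs q) y.
      unfold orient. destruct (snd q); auto using gen_winv.
    + apply gen_in; auto. rewrite <- (nth_set_nth_neq Zs (fst q) (orient q (wmul g y)) i [] Hiq).
      apply nth_In. lia.
Qed.

Lemma same_span_drop_nil Zs i : all_reduced Zs -> nth i Zs [] = [] -> same_span (drop_nth Zs i) Zs.
Proof.
  intros HZ E.
  assert (HZ' : all_reduced (drop_nth Zs i)) by (intros z Hz; eauto using in_drop_nth).
  intros x. split; apply gen_incl; auto.
  - intros z Hz. apply gen_in; eauto using in_drop_nth.
  - intros z Hz. destruct (in_drop_nth_or Zs i z [] Hz) as [Ez | Hz'].
    + rewrite Ez, E. constructor.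
    + apply gen_in; auto.
Qed.

Section NielsenReduced.

Variables (n : nat) (Zs : list word).
Hypothesis Zs_min : nielsen_minimal n Zs.

Local Notation s := (subst_letter Zs).
Local Notation inZ a := (fst a < length Zs).

Lemma nielsen_minimal_reduced : all_reduced Zs.
Proof. apply (all_reduced_on_reduced n), Zs_min. Qed.

Lemma nielsen_letter_reduced a : inZ a -> reduced (s a).
Proof. intros Ha. apply subst_letter_reduced; auto using nielsen_minimal_reduced. Qed.

Lemma nielsen_letter_bounded a : inZ a -> bounded n (s a).
Proof.
  intros Ha. unfold subst_letter.
  apply orient_reduced_on, (proj1 Zs_min), nth_In, Ha.
Qed.

Lemma nielsen_minimal_nonnil i : i < length Zs -> nth i Zs [] <> [].
Proof.
  intros Hi E. destruct Zs_min as [HZ Hmin].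
  assert (Hl := drop_nth_length Zs i Hi).
  destruct (Hmin (drop_nth Zs i)) as [Lt | [Eq Le]].
  - lia.
  - intros z Hz. apply HZ. eauto using in_drop_nth.
  - apply same_span_drop_nil; auto using nielsen_minimal_reduced.
  - pose proof (drop_nth_sum (@length letter) Zs i [] Hi). rewrite E in *.
    unfold total_length in Lt. simpl in *. lia.
  - pose proof (drop_nth_sum (fun z => S (half_code (2 * n) z)) Zs i [] Hi) as S1.
    rewrite E in S1. change (half_code (2 * n) []) with 0 in S1. unfold weight in Le. lia.
Qed.

Lemma nielsen_letter_nonnil a : inZ a -> s a <> [].
Proof.
  intros Ha E. apply (nielsen_minimal_nonnil (fst a) Ha), length_zero_iff_nil.
  rewrite <- (orient_length a). change (length (s a) = 0). rewrite E. reflexivity.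
Qed.

Lemma nielsen_move_not_smaller p q : inZ p -> inZ q -> fst p <> fst q ->
  length (s q) <= length (wmul (s p) (s q)) /\
  (length (s q) = length (wmul (s p) (s q)) ->
   half_code (2 * n) (s q) <= half_code (2 * n) (wmul (s p) (s q))).
Proof.
  intros Hp Hq Hpq. destruct Zs_min as [HZ Hmin].
  set (y := wmul (s p) (s q)).
  set (z' := orient q y).
  assert (Hle : nielsen_le n Zs (set_nth Zs (fst q) z')).
  { apply Hmin.
    - rewrite set_nth_length. lia.
    - intros z Hz. apply in_set_nth in Hz as [-> | Hz]; auto.
      apply orient_reduced_on, reduced_on_wmul;
        split; auto using nielsen_letter_reduced, nielsen_letter_bounded.
    - apply same_span_nielsen_move; auto using nielsen_minimal_reduced. }
  pose proof (set_nth_sum (@length letter) Zs (fst q) z' [] Hq) as S1.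
  pose proof (set_nth_sum (fun z => S (half_code (2 * n) z)) Zs (fst q) z' [] Hq) as S2.
  cbv beta in S2.
  assert (length (nth (fst q) Zs []) = length (s q)) by (symmetry; apply orient_length).
  assert (length z' = length y) by apply orient_length.
  assert (half_code (2 * n) (nth (fst q) Zs []) = half_code (2 * n) (s q))
    by (symmetry; apply half_code_orient).
  assert (half_code (2 * n) z' = half_code (2 * n) y) by apply half_code_orient.
  unfold nielsen_le, total_length, weight in Hle.
  split; [|intros]; lia.
Qed.

Lemma nielsen_N1 pu pv : inZ pu -> inZ pv -> pu <> pv ->
  2 * lcp (s pu) (s pv) <= length (s pu).
Proof.
  intros Hu Hv Huv.
  destruct (Nat.eq_dec (fst pu) (fst pv)) as [E | E].
  - rewrite (letter_same_fst pu pv E Huv), subst_letter_linv, winv_length.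
    pose proof (lcp_winv_self _ (nielsen_letter_reduced pv Hv)
                  (nielsen_letter_nonnil pv Hv)). lia.
  - destruct (nielsen_move_not_smaller (linv pu) pv) as [L _]; auto.
    pose proof (nielsen_letter_reduced pu Hu) as Ru.
    pose proof (wmul_length _ _ (winv_reduced _ Ru) (nielsen_letter_reduced pv Hv)) as Lw.
    rewrite subst_letter_linv in L. rewrite winv_involutive, winv_length in Lw. lia.
Qed.

(* Otherwise the move [s pu := winv (s pv) * s pu] would keep the length and trade the
   prefix [firstn a (s pv)] of [s pu] for [firstn a (winv (s pv))], lowering its half code. *)
Lemma nielsen_half_prefix pu pv : inZ pu -> inZ pv -> pu <> pv ->
  let a := lcp (s pu) (s pv) in
  2 * a = length (s pv) ->
  word_code (2 * n) (firstn a (s pv)) <= word_code (2 * n) (firstn a (winv (s pv))).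
Proof.
  intros Hu Hv Huv a Ha.
  set (u := s pu) in *. set (v := s pv) in *.
  assert (Ru := nielsen_letter_reduced pu Hu). assert (Rv := nielsen_letter_reduced pv Hv).
  assert (Iuv : fst pu <> fst pv).
  { intros E. pose proof (lcp_winv_self v Rv (nielsen_letter_nonnil pv Hv)).
    unfold a, u in Ha. rewrite (letter_same_fst pu pv E Huv), subst_letter_linv in Ha.
    fold v in Ha. lia. }
  pose proof (nielsen_N1 pu pv Hu Hv Huv) as Au. fold u v a in Au.
  set (P := firstn a v). set (Q := firstn a (winv v)). set (r := skipn a u).
  assert (Eu : u = P ++ r) by (unfold P, r, a; rewrite <- lcp_firstn; symmetry; apply firstn_skipn).
  assert (LP : length P = a) by (unfold P; rewrite length_firstn; lia).
  assert (LQ : length Q = a) by (unfold Q; rewrite length_firstn, winv_length; lia).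
  assert (Er : length r = length u - a) by (unfold r; apply length_skipn).
  assert (Emove : wmul (winv v) u = Q ++ r).
  { rewrite wmul_lcp, winv_involutive, winv_length, lcp_sym by auto using winv_reduced.
    fold a. replace (length v - a) with a by lia. reflexivity. }
  destruct (nielsen_move_not_smaller (linv pv) pu) as [_ M]; auto.
  rewrite subst_letter_linv in M. fold u v in M. rewrite Emove in M.
  apply Nat.nlt_ge. intros Hlt.
  assert (bu := nielsen_letter_bounded pu Hu). assert (bv := nielsen_letter_bounded pv Hv).
  pose proof (half_code_lt_prefix n P Q r) as C.
  rewrite <- Eu in C. specialize (M ltac:(rewrite Eu at 1; rewrite !length_app; lia)).
  enough (half_code (2 * n) (Q ++ r) < half_code (2 * n) u) by lia.
  apply C; try lia.
  - apply bounded_firstn, bv.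
  - apply bounded_firstn, bounded_winv, bv.
  - apply bounded_skipn, bu.
Qed.

Lemma nielsen_N2 pu pv pw : inZ pu -> inZ pv -> inZ pw -> pu <> pv -> pw <> linv pv ->
  lcp (s pu) (s pv) + lcp (s pw) (winv (s pv)) < length (s pv).
Proof.
  intros Hu Hv Hw Huv Hwv.
  set (v := s pv).
  assert (Rv : reduced v) by exact (nielsen_letter_reduced pv Hv).
  assert (bv : bounded n v) by exact (nielsen_letter_bounded pv Hv).
  assert (Hvu : pv <> pu) by auto.
  assert (Hvw : linv pv <> pw) by auto.
  pose proof (nielsen_N1 pv pu Hv Hu Hvu) as A.
  pose proof (nielsen_N1 (linv pv) pw Hv Hw Hvw) as B.
  rewrite subst_letter_linv in B. fold v in A, B. rewrite winv_length, (lcp_sym (winv v)) in B.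
  rewrite lcp_sym in A.
  set (a := lcp (s pu) v) in *. set (b := lcp (s pw) (winv v)) in *.
  apply Nat.nle_gt. intros L.
  assert (Ha : 2 * a = length v) by lia. assert (Hb : b = a) by lia.
  pose proof (nielsen_half_prefix pu pv Hu Hv Huv Ha) as C1.
  pose proof (nielsen_half_prefix pw (linv pv) Hw Hv (not_eq_sym Hvw)) as C2.
  rewrite subst_letter_linv, winv_involutive, winv_length in C2. fold v b in C2.
  specialize (C2 ltac:(lia)). rewrite Hb in C2. fold v a in C1.
  set (P := firstn a v) in *. set (S := skipn a v).
  assert (EPQ : P = firstn a (winv v)).
  { apply (word_code_inj n); [| | | lia].
    - apply bounded_firstn, bv.
    - apply bounded_firstn, bounded_winv, bv.
    - unfold P. rewrite !length_firstn, winv_length. reflexivity. }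
  assert (Ev : v = P ++ S) by (symmetry; apply firstn_skipn).
  assert (LS : length S = a) by (unfold S; rewrite length_skipn; lia).
  assert (EP : P = winv S).
  { rewrite EPQ, Ev, winv_app, firstn_app, winv_length, LS, Nat.sub_diag, firstn_O, app_nil_r.
    apply firstn_all2. rewrite winv_length. lia. }
  rewrite EP in Ev. rewrite Ev in Rv. apply reduced_winv_app in Rv.
  apply (nielsen_letter_nonnil pv Hv). fold v. apply length_zero_iff_nil.
  rewrite <- LS, Rv in Ha. simpl in Ha. lia.
Qed.

Let cancel_next (a : letter) (rest : word) : nat :=
  match rest with [] => 0 | b :: _ => lcp (winv (s a)) (s b) end.

(* By N1 and N2 the cancellations on the two sides of a factor never meet, so every
   factor of a reduced product keeps a nonempty prefix. *)
Lemma subst_word_prefix rest a : reduced (a :: rest) -> bounded (length Zs) (a :: rest) ->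
  cancel_next a rest < length (s a) /\
  exists t, subst_word Zs (a :: rest) = firstn (length (s a) - cancel_next a rest) (s a) ++ t.
Proof.
  revert a. induction rest as [|b rest IH]; intros a Hr Hb;
    apply bounded_cons in Hb as [Ha Hb]; assert (NEa := nielsen_letter_nonnil a Ha).
  - split; [destruct (s a); simpl; [congruence | lia]|]. exists [].
    simpl. rewrite wmul_nil_r, Nat.sub_0_r, firstn_all, app_nil_r
      by exact (nielsen_letter_reduced a Ha).
    reflexivity.
  - pose proof Hb as Hb'. apply bounded_cons in Hb' as [Hb0 _].
    destruct (IH b (reduced_tl _ _ Hr) Hb) as [Hc' [t' Et']].
    assert (Hba : b <> linv a) by (destruct Hr; auto).
    set (c := lcp (winv (s a)) (s b)).
    assert (Cca : c < length (s a)).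
    { pose proof (nielsen_N1 (linv a) b Ha Hb0 (not_eq_sym Hba)) as C.
      rewrite subst_letter_linv, winv_length in C. fold c in C.
      destruct (s a); simpl in *; [congruence | lia]. }
    assert (Ccc : c + cancel_next b rest < length (s b)).
    { destruct rest as [|d rest'].
      - pose proof (nielsen_N1 b (linv a) Hb0 Ha Hba) as C.
        rewrite subst_letter_linv, lcp_sym in C. fold c in C.
        pose proof (nielsen_letter_nonnil b Hb0).
        simpl. destruct (s b); simpl in *; [congruence | lia].
      - apply bounded_cons in Hb as [_ Hd]. apply bounded_cons in Hd as [Hd _].
        assert (Hdb : d <> linv b) by (destruct Hr as [_ [Hr _]]; auto).
        pose proof (nielsen_N2 (linv a) b d Ha Hb0 Hd (not_eq_sym Hba) Hdb) as C.
        rewrite subst_letter_linv, (lcp_sym (s d)) in C. simpl. lia. }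
    split; [exact Cca|].
    change (subst_word Zs (a :: b :: rest)) with (wmul (s a) (subst_word Zs (b :: rest))).
    rewrite wmul_lcp by auto using subst_word_reduced, nielsen_letter_reduced.
    assert (E : lcp (winv (s a)) (subst_word Zs (b :: rest)) = c).
    { rewrite Et'. apply lcp_firstn_app; lia. }
    rewrite E. eauto.
Qed.

Lemma subst_word_nonnil ws : reduced ws -> bounded (length Zs) ws -> ws <> [] ->
  subst_word Zs ws <> [].
Proof.
  intros Hr Hb Hn. destruct ws as [|a rest]; [congruence|].
  destruct (subst_word_prefix rest a Hr Hb) as [C [t ->]].
  destruct (length (s a) - cancel_next a rest) as [|k] eqn:Q; [lia|].
  destruct (s a); simpl; [simpl in C; lia | congruence].
Qed.

End NielsenReduced.

(** * Retracts of free groups *)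

Lemma weval_subst_word n m (phi : nat -> free_group n) Zs w :
  (forall i, i < m -> proj1_sig (phi i) = nth i Zs []) -> bounded m w ->
  proj1_sig (weval (free_group n) phi w) = subst_word Zs w.
Proof.
  intros Hphi Hw. induction w as [|a w IH]; [reflexivity|].
  apply bounded_cons in Hw as [Ha Hw]. simpl.
  rewrite leval_free_group, Hphi, IH by assumption. reflexivity.
Qed.

(* A Nielsen-minimal generating system of the span of [Ys] is a free basis of it. *)
Lemma nielsen_embedding n Ys : all_reduced_on n Ys ->
  exists m (psi : free_group m -> free_group n),
    m <= length Ys /\ is_hom _ _ psi /\ (forall b b', psi b = psi b' -> b = b') /\
    forall a, (exists b, psi b = a) <-> gen Ys (proj1_sig a).
Proof.
  intros HY. destruct (nielsen_minimal_exists n Ys HY) as [Zs [Hlen [Hspan Hmin]]].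
  assert (HZ : all_reduced Zs) by apply (all_reduced_on_reduced n), Hmin.
  set (m := length Zs).
  set (phi := fun i => weval (free_group n) (fgen n) (nth i Zs [])).
  set (psi := fun b : free_group m => weval (free_group n) phi (proj1_sig b)).
  assert (Epsi : forall b, proj1_sig (psi b) = subst_word Zs (proj1_sig b)).
  { intros b. apply (weval_subst_word n m); [|apply (proj2_sig b)].
    intros i Hi. apply weval_fgen_word, (proj1 Hmin), nth_In, Hi. }
  assert (Hpsi : is_hom (free_group m) (free_group n) psi) by (intros x y; apply weval_wmul).
  exists m, psi. split; [exact Hlen|]. split; [exact Hpsi|]. split.
  - intros b b' E. apply gmul_inv_eq1.
    set (d := gmul (free_group m) b (ginv (free_group m) b')).
    assert (Pd : proj1_sig (psi d) = []).
    { unfold d. rewrite Hpsi, hom_inv, E, gmulxV by exact Hpsi. reflexivity. }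
    apply fword_eq. destruct (proj1_sig d) as [|c w] eqn:Ed; [reflexivity | exfalso].
    destruct (proj2_sig d) as [Rd Bd].
    apply (subst_word_nonnil n Zs Hmin (proj1_sig d)); auto; [rewrite Ed; discriminate|].
    rewrite <- Epsi. exact Pd.
  - intros a. rewrite <- (Hspan (proj1_sig a)), gen_subst_word by exact HZ. split.
    + intros [b <-]. exists (proj1_sig b). split; [apply (proj2_sig b) | symmetry; apply Epsi].
    + intros [w [Hw Ew]]. exists (exist _ w Hw). apply fword_eq. rewrite Epsi. exact Ew.
Qed.

Lemma idempotent_fixed_gen n (e : free_group n -> free_group n) :
  is_hom _ _ e -> (forall y, e (e y) = e y) ->
  forall a, e a = a <-> gen (map (fun i => proj1_sig (e (fgen n i))) (seq 0 n)) (proj1_sig a).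
Proof.
  intros He Hee a. set (Ys := map (fun i => proj1_sig (e (fgen n i))) (seq 0 n)).
  assert (LY : length Ys = n) by (unfold Ys; rewrite length_map, length_seq; reflexivity).
  assert (HYi : forall i, i < n -> proj1_sig (e (fgen n i)) = nth i Ys []).
  { intros i Hi. symmetry. exact (nth_map_seq (fun j => proj1_sig (e (fgen n j))) n i [] Hi). }
  assert (HY : all_reduced Ys).
  { intros y Hy. unfold Ys in Hy. apply in_map_iff in Hy as [i [<- _]]. apply (proj2_sig (e _)). }
  assert (Ee : forall w, bounded n w ->
            proj1_sig (e (weval (free_group n) (fgen n) w)) = subst_word Ys w).
  { intros w Hw. rewrite hom_weval by exact He. apply (weval_subst_word n n); auto. }
  rewrite gen_subst_word, LY by exact HY. split.
  - intros Ea. exists (proj1_sig a). split; [apply (proj2_sig a)|].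
    rewrite <- Ee, weval_fgen, Ea by apply (proj2_sig a). reflexivity.
  - intros [w [Hw Ew]].
    assert (Ea : e (weval (free_group n) (fgen n) w) = a)
      by (apply fword_eq; rewrite Ee by apply Hw; exact Ew).
    rewrite <- Ea. apply Hee.
Qed.

Lemma retract_free_group X n : retract X (free_group n) ->
  exists m, m <= n /\ isomorphic X (free_group m).
Proof.
  intros [f [g [Hf [Hg Egf]]]].
  set (e := fun y => f (g y)).
  assert (He : is_hom _ _ e) by (apply (hom_comp _ X); assumption).
  assert (Hee : forall y, e (e y) = e y) by (intros y; unfold e; rewrite Egf; reflexivity).
  set (Ys := map (fun i => proj1_sig (e (fgen n i))) (seq 0 n)).
  assert (HY : all_reduced_on n Ys).
  { intros y Hy. unfold Ys in Hy. apply in_map_iff in Hy as [i [<- _]]. apply (proj2_sig (e _)). }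
  destruct (nielsen_embedding n Ys HY) as [m [psi [Hm [Hpsi [Ipsi Rpsi]]]]].
  exists m. split; [unfold Ys in Hm; rewrite length_map, length_seq in Hm; exact Hm|].
  apply (retract_iso_of_fixed X (free_group n) (free_group m) f g psi); auto.
  intros a. rewrite Rpsi. apply (idempotent_fixed_gen n e He Hee).
Qed.

(** * Capacity and depth *)

Lemma free_group_retract_iff a b : retract (free_group a) (free_group b) <-> a <= b.
Proof.
  split; [|apply free_group_retract_le].
  intros R. destruct (retract_free_group _ b R) as [m [Hm I]].
  rewrite (free_group_rank_inj a m I). exact Hm.
Qed.

Section FreeOfFiniteRank.

Variables (k : nat) (F : group) (b : nat -> F).
Hypothesis F_free : free_on F k b.

Lemma free_on_iso_free_group : isomorphic F (free_group k).
Proof. exact (free_on_iso F (free_group k) k b (fgen k) F_free (free_group_free k)). Qed.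

Lemma retract_free_on_iff X :
  retract X F <-> exists m, m <= k /\ isomorphic X (free_group m).
Proof.
  pose proof free_on_iso_free_group as FW. split.
  - intros R. apply retract_free_group, (retract_iso_r _ _ _ R FW).
  - intros [m [Hm I]]. apply (retract_iso_l _ _ _ I).
    exact (retract_iso_r _ _ _ (free_group_retract_le m k Hm) (iso_sym _ _ FW)).
Qed.

Lemma sretract_free_on_iff X :
  sretract X F <-> exists m, m < k /\ isomorphic X (free_group m).
Proof.
  pose proof free_on_iso_free_group as FW. split.
  - intros [R NR]. apply retract_free_on_iff in R as [m [Hm I]].
    exists m. split; [|exact I].
    destruct (Nat.eq_dec m k) as [-> | Hne]; [|lia]. exfalso. apply NR, iso_retract.
    exact (iso_trans _ _ _ FW (iso_sym _ _ I)).
  - intros [m [Hm I]]. split; [apply retract_free_on_iff; exists m; split; [lia | exact I]|].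
    intros R. apply (retract_iso_r _ _ _ (retract_iso_l _ _ _ (iso_sym _ _ FW) R)) in I.
    apply free_group_retract_iff in I. lia.
Qed.

Lemma chain_length_le n : chain F n -> n <= S k.
Proof.
  intros [X [H1 Hstep]]. destruct n as [|n]; [lia|].
  assert (Hrank : forall i, 1 <= i <= S n ->
            exists r, r + i <= S k /\ isomorphic (X i) (free_group r)).
  { intros i Hi. induction i as [|i IH]; [lia|].
    destruct (Nat.eq_dec i 0) as [-> | Hi0].
    - destruct (proj1 (retract_free_on_iff (X 1)) (H1 ltac:(lia))) as [r [Hr I]].
      exists r. split; [lia | exact I].
    - destruct IH as [r [Hr I]]; [lia|].
      destruct (Hstep i ltac:(lia) ltac:(lia)) as [R NI].
      destruct (retract_free_group _ r (retract_iso_r _ _ _ R I)) as [r' [Hr' I']].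
      exists r'. split; [|exact I'].
      destruct (Nat.eq_dec r' r) as [-> | Hne]; [|lia].
      exfalso. apply NI. exact (iso_trans _ _ _ I' (iso_sym _ _ I)). }
  destruct (Hrank (S n) ltac:(lia)) as [r [Hr _]]. lia.
Qed.

Lemma schain_free_on : schain F (S k).
Proof.
  exists (fun i => free_group (S k - i)). split.
  - intros _. apply retract_free_on_iff. exists (S k - 1). split; [lia | apply iso_refl].
  - intros i Hi Hik. split; rewrite free_group_retract_iff; lia.
Qed.

End FreeOfFiniteRank.

Lemma num_iso_classes_free_groups (P : group -> Prop) n :
  (forall X, P X <-> exists m, m < n /\ isomorphic X (free_group m)) ->
  num_iso_classes P n.
Proof.
  intros HP. exists free_group. split; [|split].
  - intros i Hi. apply HP. exists i. split; [exact Hi | apply iso_refl].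
  - intros i j _ _. apply free_group_rank_inj.
  - intros X HX. apply HP in HX as [m [Hm I]]. eauto.
Qed.

Lemma sretract_pretract X A : sretract X A -> pretract X A.
Proof. intros [R NR]. split; [exact R|]. intros I. apply NR, iso_retract, iso_sym, I. Qed.

Lemma schain_chain A n : schain A n -> chain A n.
Proof.
  intros [X [H1 Hstep]]. exists X. split; [exact H1|].
  intros i Hi Hin. apply sretract_pretract, Hstep; assumption.
Qed.

Theorem proposition3p5 (k : nat) (F : group) (b : nat -> F) :
  free_on F k b ->
  (strong_capacity F k /\ capacity F (S k)) /\
  (strong_depth F (S k) /\ depth F (S k)).
Proof.
  intros Hfree. split; split.
  - apply num_iso_classes_free_groups. exact (sretract_free_on_iff k F b Hfree).
  - apply num_iso_classes_free_groups. intros X. rewrite (retract_free_on_iff k F b Hfree).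
    split; intros [m [Hm I]]; exists m; split; auto; lia.
  - split; [exact (schain_free_on k F b Hfree)|].
    intros m Hm. exact (chain_length_le k F b Hfree m (schain_chain F m Hm)).
  - split; [exact (schain_chain F _ (schain_free_on k F b Hfree))|].
    exact (chain_length_le k F b Hfree).
Qed.
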